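(* Let $C$ be a projective completely regular linear code in $\mathbb{F}_q^n$ (the Hamming space $H(n,q)$) with covering radius $\rho$, and for $0\le i\le\rho$ let $d_i$ be the number of cosets of $C$ of weight $i$. Then $d_i^2\ge d_{i-1}d_{i+1}$ for all $1\le i\le \rho-1$.
   Context: Weights are Hamming weights. A coset of a linear code $C$ is a translate $u+C$; its weight is the minimum weight of its elements; the covering radius $\rho$ is the largest coset weight. $C$ is completely regular if the weight distribution of every coset depends only on the weight of that coset. $C$ is projective if a generator matrix of $C$ has no zero column and no two columns that are scalar multiples of each other. *)

From mathcomp Require Import all_boot all_order all_algebra all_field.
Set Implicit Arguments. Unset Strict Implicit. Unset Printing Implicit Defensive.
Import GRing.Theory.
Local Open Scope ring_scope.

(* Hamming space H(n,q) = F^n, with F a finite field (|F| = q). *)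
Section Codes.
Variables (F : finFieldType) (n : nat).

Definition wt (x : 'rV[F]_n) : nat := #|[set i : 'I_n | x 0 i != 0]|.

Definition code k (G : 'M[F]_(k, n)) : {set 'rV[F]_n} :=
  [set x : 'rV[F]_n | (x <= G)%MS].

Definition generator_matrix k (G : 'M[F]_(k, n)) : bool := row_free G.

Definition projective k (G : 'M[F]_(k, n)) : bool :=
  [forall j : 'I_n, col j G != 0] &&
  [forall j1 : 'I_n, forall j2 : 'I_n,
     (j1 != j2) ==> [forall a : F, col j1 G != a *: col j2 G]].

Definition coset (C : {set 'rV[F]_n}) (u : 'rV[F]_n) : {set 'rV[F]_n} :=
  [set u + c | c in C].

Definition cosets (C : {set 'rV[F]_n}) : {set {set 'rV[F]_n}} :=
  [set coset C u | u in [set: 'rV[F]_n]].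

(* weight of a (nonempty) set of words: minimum weight of its elements
   (all weights are <= n, so n is a neutral upper bound) *)
Definition coset_wt (D : {set 'rV[F]_n}) : nat := \big[minn/n]_(x in D) wt x.

Definition covering_radius (C : {set 'rV[F]_n}) : nat :=
  \max_(D in cosets C) coset_wt D.

Definition wdist (D : {set 'rV[F]_n}) (i : nat) : nat :=
  #|[set x in D | wt x == i]|.

Definition completely_regular (C : {set 'rV[F]_n}) : Prop :=
  forall D1 D2, D1 \in cosets C -> D2 \in cosets C ->
    coset_wt D1 = coset_wt D2 -> forall j, wdist D1 j = wdist D2 j.

Definition ncosets_wt (C : {set 'rV[F]_n}) (i : nat) : nat :=
  #|[set D in cosets C | coset_wt D == i]|.

End Codes.

From mathcomp Require Import all_boot all_order all_algebra all_field.
Set Implicit Arguments. Unset Strict Implicit. Unset Printing Implicit Defensive.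
Import Order.TTheory GRing.Theory.

(* Call a step any move x -> x + a e_l with a <> 0; it changes the weight
   [cwt x] of the coset x + C by at most one.  Summing the weight distributions
   of the cosets of the neighbours of x amounts to counting, over the words of
   x + C, the steps towards a given weight, so the sum depends only on the
   weight distribution of x + C.  Complete regularity therefore makes the
   numbers c(x), a(x), b(x) of steps lowering, keeping and raising [cwt x]
   depend only on i = cwt x.  Counting the steps between levels i and i+1 from
   both ends gives N_i b_i = N_(i+1) c_(i+1), where N_i = d_i |C| is the number
   of vectors of coset weight i.  Since steps commute, b cannot increase and c
   cannot decrease along a raising step, whence
   N_(i-1) N_(i+1) b_(i-1) c_(i+1) = N_i^2 c_i b_i <= N_i^2 b_(i-1) c_(i+1). *)

Lemma sum_ord_indicator N m (f : nat -> nat) :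
  m < N -> \sum_(s < N) (m == s) * f s = f m.
Proof.
move=> lt_mN; rewrite (bigD1 (Ordinal lt_mN)) //= eqxx mul1n big1 ?addn0 // => s ne_s.
by case: eqP => // eq_ms; case/eqP: ne_s; apply: val_inj.
Qed.

(* From a word of weight s, s steps clear a nonzero coordinate, s (q - 2) change
   it to another nonzero value and (n - s) (q - 1) fill a zero coordinate. *)
Definition nsteps_wt (q n s j : nat) : nat :=
  s * ((s.-1 == j) + q.-2 * (s == j)) + (n - s) * (q.-1 * (s.+1 == j)).

Section HammingSteps.
Variables (F : finFieldType) (n : nat).
Implicit Types (x w : 'rV[F]_n) (p : 'I_n * F).

Lemma wt_le_dim x : wt x <= n.
Proof. by rewrite /wt -[n in _ <= n]card_ord max_card. Qed.

Lemma wdist_sum (D : {set 'rV[F]_n}) j : wdist D j = \sum_(z in D) (wt z == j).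
Proof.
rewrite /wdist -sum1_card big_mkcond [RHS]big_mkcond.
by apply: eq_bigr => z _; rewrite inE; case: (z \in D).
Qed.

Definition step x p : 'rV[F]_n := (x + p.2 *: delta_mx 0 p.1)%R.
Definition step_inv p : 'I_n * F := (p.1, - p.2)%R.
Definition steps : {set 'I_n * F} := [set p | p.2 != 0%R].

Lemma step_invK : involutive step_inv.
Proof. by case=> l a; rewrite /step_inv opprK. Qed.

Lemma stepK p : cancel (step^~ p) (step^~ (step_inv p)).
Proof. by move=> x; rewrite /step scaleNr addrK. Qed.

Lemma stepAC x p q : step (step x p) q = step (step x q) p.
Proof. by rewrite /step addrAC. Qed.

Lemma step_inv_steps p : (step_inv p \in steps) = (p \in steps).
Proof. by rewrite !inE oppr_eq0. Qed.

Lemma wt_step w l a :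
  wt (step w (l, a)) + (w 0%R l != 0%R) = wt w + (w 0%R l + a != 0%R)%R.
Proof.
rewrite /wt /step /= (cardsD1 l [set i | _]) (cardsD1 l [set i | w 0%R i != 0%R]).
have -> : [set i | (w + a *: delta_mx 0 l)%R 0%R i != 0%R] :\ l =
          [set i | w 0%R i != 0%R] :\ l.
  by apply/setP => i; rewrite !inE !mxE; case: eqP => //= _; rewrite mulr0 addr0.
by rewrite !inE !mxE !eqxx mulr1 [LHS]addnC addnA [RHS]addnAC.
Qed.

Lemma wt_step_le w p : wt (step w p) <= (wt w).+1.
Proof.
case: p => l a; apply: leq_trans (leq_addr (w 0%R l != 0%R) _) _.
by rewrite wt_step -[(wt w).+1]addn1 leq_add2l leq_b1.
Qed.

Lemma sum_step_coord w l j :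
  \sum_(a : F | a != 0%R) (wt (step w (l, a)) == j) =
  if w 0%R l != 0%R then ((wt w).-1 == j) + #|F|.-2 * (wt w == j)
  else #|F|.-1 * ((wt w).+1 == j).
Proof.
case: ifPn => [wl_nz | /negPn/eqP wl0].
- have kill_l : wt (step w (l, - w 0%R l)%R) = (wt w).-1.
    by have := wt_step w l (- w 0%R l)%R; rewrite wl_nz subrr eqxx addn0 addn1 => <-.
  rewrite (bigD1 (- w 0%R l)%R) ?oppr_eq0 //= kill_l; congr (_ + _).
  rewrite (eq_bigr (fun _ => (wt w == j) : nat)) => [|a /andP [a_nz a_ne]]; last first.
    have := wt_step w l a; rewrite wl_nz addn1.
    suff -> : (w 0%R l + a != 0)%R by rewrite addn1 => -[->].
    by apply: contra a_ne; rewrite addrC addr_eq0.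
  rewrite sum_nat_cond_const; congr (_ * _).
  have := cardD1 (- w 0%R l)%R (predC1 (0 : F)%R).
  rewrite cardC1 !inE oppr_eq0 wl_nz add1n => ->.
  by apply: eq_card => a; rewrite !inE andbC.
- rewrite (eq_bigr (fun _ => ((wt w).+1 == j) : nat)) => [|a a_nz]; last first.
    by have := wt_step w l a; rewrite wl0 add0r a_nz eqxx addn0 addn1 => ->.
  rewrite sum_nat_cond_const -(cardC1 (0 : F)%R); congr (_ * _).
  by apply: eq_card => a; rewrite !inE.
Qed.

Lemma card_steps_wt w j :
  \sum_(p in steps) (wt (step w p) == j) = nsteps_wt #|F| n (wt w) j.
Proof.
have -> : \sum_(p in steps) (wt (step w p) == j) =
          \sum_(l < n) \sum_(a : F | a != 0%R) (wt (step w (l, a)) == j).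
  by rewrite pair_big_dep; apply: eq_bigl => -[l a]; rewrite inE.
rewrite (eq_bigr _ (fun l _ => sum_step_coord w l j)).
rewrite (bigID (fun l => w 0%R l != 0%R)) /=.
rewrite (eq_bigr (fun _ => ((wt w).-1 == j) + #|F|.-2 * (wt w == j))) => [|l ->] //.
rewrite [X in _ + X](eq_bigr (fun _ => #|F|.-1 * ((wt w).+1 == j))) => [|l /negbTE ->] //.
rewrite !sum_nat_cond_const /nsteps_wt; congr (_ * _ + _ * _).
have -> : [set l | ~~ (w 0%R l != 0%R)] = ~: [set l | w 0%R l != 0%R].
  by apply/setP => l; rewrite !inE.
by rewrite cardsCs setCK card_ord.
Qed.

End HammingSteps.

Arguments steps {F n}.

Section CosetLevels.
Variables (F : finFieldType) (n : nat) (C : {set 'rV[F]_n}).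
Hypothesis C0 : 0%R \in C.
Implicit Types (x y w : 'rV[F]_n) (p : 'I_n * F).

Lemma mem_coset x w : (w \in coset C x) = ((w - x)%R \in C).
Proof.
apply/imsetP/idP => [[c Cc ->]|Cwx]; first by rewrite addrC addKr.
by exists (w - x)%R; rewrite // addrC subrK.
Qed.

Lemma coset_self x : x \in coset C x.
Proof. by rewrite mem_coset subrr. Qed.

Lemma coset_addr x v : coset C (x + v)%R = [set (w + v)%R | w in coset C x].
Proof.
apply/setP => z; apply/idP/imsetP => [Cz|[w Cw ->]].
- exists (z - v)%R; last by rewrite subrK.
  by move: Cz; rewrite !mem_coset opprD addrA addrAC.
- by move: Cw; rewrite !mem_coset opprD addrACA subrr addr0.
Qed.

Definition cwt x := coset_wt (coset C x).
Definition cwdist j x := wdist (coset C x) j.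

Lemma cwt_le_wt x w : w \in coset C x -> cwt x <= wt w.
Proof. exact: (bigmin_le_cond (T := nat) n (@wt F n)). Qed.

Lemma cwt_witness x : exists2 w, w \in coset C x & wt w = cwt x.
Proof.
have [w Cw min_w] := @eq_bigmin _ nat _ n x (fun w => w \in coset C x) (@wt F n)
  (coset_self x) (fun w _ => wt_le_dim w).
by exists w; last rewrite /cwt /coset_wt min_w.
Qed.

Lemma step_coset x w p : w \in coset C x -> step w p \in coset C (step x p).
Proof. by rewrite !mem_coset /step opprD addrACA subrr addr0. Qed.

Lemma cwt_step_le x p : cwt (step x p) <= (cwt x).+1.
Proof.
have [w Cw <-] := cwt_witness x.
exact: leq_trans (cwt_le_wt (step_coset p Cw)) (wt_step_le _ _).
Qed.

Lemma cwt_step_ge x p : cwt x <= (cwt (step x p)).+1.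
Proof. by rewrite -{1}(stepK p x) cwt_step_le. Qed.

Lemma cwt_step_down x :
  0 < cwt x -> exists2 p, p \in steps & cwt (step x p) = (cwt x).-1.
Proof.
have [w Cw wt_w] := cwt_witness x => cwt_gt0.
have : 0 < wt w by rewrite wt_w.
rewrite /wt card_gt0 => /set0Pn [l]; rewrite inE => wl_nz.
exists (l, - w 0%R l)%R; first by rewrite inE oppr_eq0.
have := wt_step w l (- w 0%R l)%R; rewrite wl_nz subrr eqxx addn0 addn1 => wt_step_w.
apply/eqP; rewrite eqn_leq; apply/andP; split.
- by rewrite -ltnS prednK // -wt_w -wt_step_w ltnS cwt_le_wt ?step_coset.
- by rewrite -subn1 leq_subLR add1n cwt_step_ge.
Qed.

Lemma cwdist_lt_cwt j y : j < cwt y -> cwdist j y = 0.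
Proof.
move=> lt_j; rewrite /cwdist wdist_sum big1 // => z Cz.
by apply/eqP; rewrite eqb0; apply: contraTneq lt_j => <-; rewrite -leqNgt cwt_le_wt.
Qed.

Lemma cwdist_cwt_gt0 y : 0 < cwdist (cwt y) y.
Proof.
have [w Cw wt_w] := cwt_witness y.
by rewrite /cwdist wdist_sum (bigD1 w) //= wt_w eqxx.
Qed.

Definition nbr_cwdist j x := \sum_(p in steps) cwdist j (step x p).

Lemma nbr_cwdist_coset j x :
  nbr_cwdist j x = \sum_(w in coset C x) \sum_(p in steps) (wt (step w p) == j).
Proof.
rewrite exchange_big; apply: eq_bigr => p _.
rewrite /cwdist wdist_sum /step coset_addr big_imset //.
by move=> u v _ _; apply: addIr.
Qed.

Lemma nbr_cwdistE j x :
  nbr_cwdist j x = \sum_(s < n.+1) cwdist s x * nsteps_wt #|F| n s j.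
Proof.
rewrite nbr_cwdist_coset (eq_bigr _ (fun w _ => card_steps_wt w j)).
under eq_bigr => w _ do rewrite -(sum_ord_indicator (fun s => nsteps_wt #|F| n s j)
  (wt_le_dim w : wt w < n.+1)).
rewrite exchange_big; apply: eq_bigr => s _.
by rewrite /cwdist wdist_sum big_distrl.
Qed.

Definition steps_down x := [set p in steps | cwt (step x p) < cwt x].
Definition steps_flat x := [set p in steps | cwt (step x p) == cwt x].
Definition steps_up x := [set p in steps | cwt x < cwt (step x p)].
Definition cnum x := #|steps_down x|.
Definition anum x := #|steps_flat x|.
Definition bnum x := #|steps_up x|.

Lemma sum_steps_split x (f : 'I_n * F -> nat) :
  \sum_(p in steps) f p =
  \sum_(p in steps_down x) f p + \sum_(p in steps_flat x) f p
    + \sum_(p in steps_up x) f p.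
Proof.
rewrite [LHS]big_mkcond [in RHS]big_mkcond.
rewrite [X in _ + X + _]big_mkcond [X in _ + X]big_mkcond.
rewrite -!big_split /=; apply: eq_bigr => p _; rewrite !inE.
by case: (_ != _) => //=; case: ltngtP; rewrite ?addn0.
Qed.

Lemma card_steps_split x : #|@steps F n| = cnum x + anum x + bnum x.
Proof. by rewrite /cnum /anum /bnum -!sum1_card (sum_steps_split x). Qed.

Lemma cwt_steps_down x p : p \in steps_down x -> cwt (step x p) = (cwt x).-1.
Proof.
rewrite inE => /andP [_]; have := cwt_step_ge x p.
by case: (cwt x) => // m; rewrite !ltnS => ge_m le_m; apply/eqP; rewrite eqn_leq le_m.
Qed.

Lemma cwt_steps_flat x p : p \in steps_flat x -> cwt (step x p) = cwt x.
Proof. by rewrite inE => /andP [_ /eqP]. Qed.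

Lemma cwt_steps_up x p : p \in steps_up x -> cwt (step x p) = (cwt x).+1.
Proof.
by rewrite inE => /andP [_ lt_x]; apply/eqP; rewrite eqn_leq cwt_step_le.
Qed.

Lemma bnumE x :
  bnum x = \sum_(p : 'I_n * F) ((p \in steps) && (cwt (step x p) == (cwt x).+1)).
Proof.
rewrite /bnum -sum1_card big_mkcond; apply: eq_bigr => p _; rewrite !inE.
by case: (_ != _) => //=; rewrite eqn_leq cwt_step_le; case: (_ < _).
Qed.

Lemma cnumE y m : cwt y = m.+1 ->
  cnum y = \sum_(p : 'I_n * F) ((p \in steps) && (cwt (step y p) == m)).
Proof.
move=> cwt_y; rewrite /cnum -sum1_card big_mkcond; apply: eq_bigr => p _; rewrite !inE.
have := cwt_step_ge y p; rewrite cwt_y ltnS eqn_leq => ->; rewrite andbT ltnS.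
by case: (_ != _) => //=; case: (_ <= _).
Qed.

(* Steps commute and move cwt by at most one, so a step raising [step y p]
   also raises [y], and a step lowering [y] also lowers [step y p]. *)
Lemma bnum_step_up y p : cwt (step y p) = (cwt y).+1 -> bnum (step y p) <= bnum y.
Proof.
move=> up_p; apply/subset_leq_card/subsetP => q; rewrite !inE => /andP [-> up_q] /=.
rewrite -ltnS; apply: leq_trans (cwt_step_le (step y q) p).
by rewrite -stepAC -up_p.
Qed.

Lemma cnum_step_up y p : cwt (step y p) = (cwt y).+1 -> cnum y <= cnum (step y p).
Proof.
move=> up_p; apply/subset_leq_card/subsetP => q; rewrite !inE => /andP [-> down_q] /=.
by rewrite stepAC up_p ltnS (leq_trans (cwt_step_le _ _) down_q).
Qed.

Definition nlevel m := #|[set x | cwt x == m]|.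

Hypothesis CR : completely_regular C.

Lemma cwdist_eq j x x' : cwt x = cwt x' -> cwdist j x = cwdist j x'.
Proof. by move=> eq_cwt; apply: CR => //; apply: imset_f; rewrite inE. Qed.

Lemma nbr_cwdist_eq j x x' : cwt x = cwt x' -> nbr_cwdist j x = nbr_cwdist j x'.
Proof.
move=> eq_cwt; rewrite !nbr_cwdistE.
by apply: eq_bigr => s _; rewrite (cwdist_eq s eq_cwt).
Qed.

Lemma exists_cwt_pred x : exists y, cwt y = (cwt x).-1.
Proof.
have [cwt0|cwt_gt0] := posnP (cwt x); first by exists x; rewrite cwt0.
by have [p _ <-] := cwt_step_down cwt_gt0; exists (step x p).
Qed.

Lemma nbr_cwdist_split j x y0 : j <= cwt x -> cwt y0 = (cwt x).-1 ->
  nbr_cwdist j x = cnum x * cwdist j y0 + anum x * cwdist j x.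
Proof.
move=> le_j cwt_y0; rewrite /nbr_cwdist (sum_steps_split x).
rewrite [X in _ + X]big1 => [|p /cwt_steps_up up_p]; last first.
  by rewrite cwdist_lt_cwt // up_p ltnS.
rewrite addn0 /cnum /anum -!sum_nat_const; congr (_ + _); apply: eq_bigr => p.
- by move/cwt_steps_down => down_p; apply: cwdist_eq; rewrite down_p.
- by move/cwt_steps_flat; apply: cwdist_eq.
Qed.

Lemma cnum_eq x x' : cwt x = cwt x' -> cnum x = cnum x'.
Proof.
move=> eq_cwt; have [y0 cwt_y0] := exists_cwt_pred x.
case cwt_x: (cwt x) => [|m] in eq_cwt cwt_y0 *.
  have no_down z : cwt z = 0 -> cnum z = 0.
    by move=> cwt_z; apply: eq_card0 => p; rewrite !inE cwt_z ltn0 andbF.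
  by rewrite !no_down.
have nbr_m z : cwt z = m.+1 -> nbr_cwdist m z = cnum z * cwdist m y0.
  move=> cwt_z; rewrite (nbr_cwdist_split (y0 := y0)) ?cwt_z //.
  by rewrite (cwdist_lt_cwt (y := z)) ?cwt_z // muln0 addn0.
have pos : 0 < cwdist m y0 by have := cwdist_cwt_gt0 y0; rewrite cwt_y0.
apply/eqP; rewrite -(eqn_pmul2r pos) -!nbr_m -?eq_cwt //.
by rewrite (nbr_cwdist_eq _ (etrans cwt_x eq_cwt)).
Qed.

Lemma anum_eq x x' : cwt x = cwt x' -> anum x = anum x'.
Proof.
move=> eq_cwt; have [y0 cwt_y0] := exists_cwt_pred x.
have := nbr_cwdist_eq (cwt x) eq_cwt.
rewrite (nbr_cwdist_split (y0 := y0)) //.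
rewrite (nbr_cwdist_split (x := x') (y0 := y0)) -?eq_cwt //.
rewrite (cnum_eq eq_cwt) (cwdist_eq _ eq_cwt) => /addnI /eqP.
by rewrite eqn_pmul2r ?eq_cwt ?cwdist_cwt_gt0 // => /eqP.
Qed.

Lemma bnum_eq x x' : cwt x = cwt x' -> bnum x = bnum x'.
Proof.
move=> eq_cwt; have := card_steps_split x; rewrite (card_steps_split x').
by rewrite (cnum_eq eq_cwt) (anum_eq eq_cwt) => /addnI.
Qed.

(* Both sides count the steps from level m to level m + 1, the right-hand
   side through the reverse steps. *)
Lemma nlevel_bnum m x y : cwt x = m -> cwt y = m.+1 ->
  nlevel m * bnum x = nlevel m.+1 * cnum y.
Proof.
move=> cwt_x cwt_y.
have -> : nlevel m * bnum x = \sum_(z : 'rV[F]_n) \sum_(p : 'I_n * F)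
    [&& cwt z == m, p \in steps & cwt (step z p) == m.+1].
  rewrite /nlevel -sum_nat_cond_const big_mkcond; apply: eq_bigr => z _.
  case: eqP => [cwt_z|_] /=; last by rewrite big1.
  by rewrite (bnum_eq (x' := z)) ?cwt_x ?cwt_z // bnumE cwt_z.
have -> : nlevel m.+1 * cnum y = \sum_(z : 'rV[F]_n) \sum_(p : 'I_n * F)
    [&& cwt z == m.+1, p \in steps & cwt (step z p) == m].
  rewrite /nlevel -sum_nat_cond_const big_mkcond; apply: eq_bigr => z _.
  case: eqP => [cwt_z|_] /=; last by rewrite big1.
  by rewrite (cnum_eq (x' := z)) ?cwt_y ?cwt_z // (cnumE cwt_z).
pose flip (zp : 'rV[F]_n * ('I_n * F)) := (step zp.1 zp.2, step_inv zp.2).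
have flipK : involutive flip by move=> [z p]; rewrite /flip /= stepK step_invK.
rewrite !pair_big (reindex_inj (inv_inj flipK)); apply: eq_bigr => -[z p] _ /=.
rewrite stepK step_inv_steps.
by case: (cwt z == _); case: (p \in steps); case: (cwt (step z p) == _).
Qed.

Lemma nlevel_logconcave i : 0 < i -> nlevel i.-1 * nlevel i.+1 <= nlevel i ^ 2.
Proof.
move=> i_gt0; have [->|] := posnP (nlevel i.+1); first by rewrite muln0.
rewrite card_gt0 => /set0Pn [x2]; rewrite inE => /eqP cwt_x2.
have [p2 p2_step] : exists2 p2, p2 \in steps & cwt (step x2 p2) = i.
  by have := @cwt_step_down x2; rewrite cwt_x2; apply.
set x1 := step x2 p2 => cwt_x1.
have [p1 p1_step] : exists2 p1, p1 \in steps & cwt (step x1 p1) = i.-1.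
  by have := @cwt_step_down x1; rewrite cwt_x1; apply.
set x0 := step x1 p1 => cwt_x0.
have up_x0 : cwt (step x0 (step_inv p1)) = (cwt x0).+1.
  by rewrite stepK cwt_x0 cwt_x1 prednK.
have up_x1 : cwt (step x1 (step_inv p2)) = (cwt x1).+1.
  by rewrite stepK cwt_x1 cwt_x2.
have b0_gt0 : 0 < bnum x0.
  by apply/card_gt0P; exists (step_inv p1); rewrite inE step_inv_steps p1_step up_x0 /=.
have c2_gt0 : 0 < cnum x2.
  by apply/card_gt0P; exists p2; rewrite inE p2_step cwt_x1 cwt_x2 /=.
have b1_le_b0 : bnum x1 <= bnum x0 by rewrite -(stepK p1 x1); apply: bnum_step_up.
have c1_le_c2 : cnum x1 <= cnum x2 by rewrite -(stepK p2 x2); apply: cnum_step_up.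
have edge01 := nlevel_bnum cwt_x0 (etrans cwt_x1 (esym (prednK i_gt0))).
have edge12 := nlevel_bnum cwt_x1 cwt_x2.
rewrite prednK // in edge01.
rewrite -(@leq_pmul2r (bnum x0 * cnum x2)) ?muln_gt0 ?b0_gt0 //.
rewrite mulnACA edge01 -edge12 mulnACA expnS expn1 leq_mul2l [cnum x1 * _]mulnC.
by rewrite leq_mul ?orbT.
Qed.

Hypothesis subC : forall x y, x \in C -> y \in C -> (x - y)%R \in C.

Lemma addC x y : x \in C -> y \in C -> (x + y)%R \in C.
Proof. by move=> Cx Cy; have := subC Cx (subC C0 Cy); rewrite sub0r opprK. Qed.

Lemma eq_cosetE x u : (coset C x == coset C u) = (x \in coset C u).
Proof.
apply/eqP/idP => [<-|]; first exact: coset_self.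
rewrite mem_coset => Cxu; apply/setP => w; rewrite !mem_coset.
apply/idP/idP => Cw.
- by rewrite -(subrK x w) -addrA; apply: addC.
- by rewrite -(subrK u w) -addrA -(opprB x u); apply: subC.
Qed.

Lemma card_coset x : #|coset C x| = #|C|.
Proof. by apply: card_imset; apply: addrI. Qed.

Lemma nlevel_ncosets m : nlevel m = ncosets_wt C m * #|C|.
Proof.
rewrite /nlevel -sum1_card (partition_big (coset C)
  (fun D => D \in [set D in cosets C | coset_wt D == m])) => [|x]; last first.
  by rewrite !inE => /eqP <-; rewrite eqxx andbT imset_f.
rewrite /ncosets_wt -sum_nat_const; apply: eq_bigr => D; rewrite inE.
case/andP => /imsetP [u _ ->] /eqP cwt_u.
rewrite -(card_coset u) -sum1_card; apply: eq_bigl => x; rewrite !inE eq_cosetE.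
apply/andP/idP => [[]//|Cx]; split=> //.
by rewrite -cwt_u /cwt; have /eqP -> : coset C x == coset C u by rewrite eq_cosetE.
Qed.

End CosetLevels.

Theorem corollary5 (F : finFieldType) (n k : nat) (G : 'M[F]_(k, n)) :
  generator_matrix G -> projective G -> completely_regular (code G) ->
  forall i : nat, 1 <= i <= (covering_radius (code G)).-1 ->
    ncosets_wt (code G) i.-1 * ncosets_wt (code G) i.+1
      <= ncosets_wt (code G) i ^ 2.
Proof.
move=> _ _ CR i /andP [i_gt0 _].
have C0 : 0%R \in code G by rewrite inE sub0mx.
have subC x y : x \in code G -> y \in code G -> (x - y)%R \in code G.
  by rewrite !inE => Cx Cy; rewrite addmx_sub ?eqmx_opp.
have C_gt0 : 0 < #|code G| by apply/card_gt0P; exists 0%R.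
have := nlevel_logconcave C0 CR i_gt0; rewrite !(nlevel_ncosets C0 subC).
by rewrite mulnACA expnMn mulnn leq_pmul2r // expn_gt0 C_gt0.
Qed.
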